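(* Let $\Omega$ be a Keplerian branch around ${\rm O}$ in the plane ${\rm O}xy$ with equation $r=\alpha x+\beta y+\gamma$, $\gamma>0$, which possesses a horizontal chord (two distinct points of $\Omega$ with the same ordinate). Then there is a unique triple $(\phi,M,N)\in\,]0,\pi[\times\mathbb{R}\times\,]0,+\infty[$ such that $\Omega$ is the image of the vertical branch $\Sigma$ with equation $r=My+N$ by the affine map $(x_1,y_1)\mapsto(x_3,y_3)$ defined by $x_1=x_3-M\frac{\cos\phi}{\sin\phi}y_3-N\cos\phi$, $y_1=\frac{1}{\sin\phi}y_3$.
   Context: In the Euclidean plane ${\rm O}xy$, $r=\sqrt{x^2+y^2}$. A Keplerian branch around ${\rm O}$ is the image of a solution of Newton's system $\ddot q=-q/\|q\|^3$ (extended through collisions by bouncing back along the same ray with the same energy). For $\gamma>0$, the set of points satisfying $r=\alpha x+\beta y+\gamma$ is an (irreducible) Keplerian branch around ${\rm O}$. *)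

From Stdlib Require Import Reals.
Open Scope R_scope.

Definition rad (x y : R) : R := sqrt (x ^ 2 + y ^ 2).

Definition kbranch (alpha beta gamma : R) (x y : R) : Prop :=
  rad x y = alpha * x + beta * y + gamma.

Definition vbranch (M N : R) (x y : R) : Prop := rad x y = M * y + N.

Definition has_horizontal_chord (P : R -> R -> Prop) : Prop :=
  exists x x' y, x <> x' /\ P x y /\ P x' y.

Definition is_image_of_vertical (P : R -> R -> Prop) (phi M N : R) : Prop :=
  forall x3 y3 : R,
    P x3 y3 <->
    exists x1 y1 : R,
      vbranch M N x1 y1 /\
      x1 = x3 - M * (cos phi / sin phi) * y3 - N * cos phi /\
      y1 = / sin phi * y3.

(* The affine map of the statement is the planar shadow of a linear map of space-time
   (x, y, r) |-> (x + c r, s y, r + c x), with c = cos phi and s = sin phi, which multiplies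
   the cone form x^2 + y^2 - r^2 by s^2 and preserves the half-cone r >= 0.  It therefore
   sends the vertical branch r = M y + N onto the branch r = c x + s M y + s^2 N.  A horizontal
   chord forces |alpha| < 1, so phi = acos alpha, M = beta / sin phi, N = gamma / sin^2 phi
   realise Omega, and these are the only choice because a branch with gamma > 0 and
   |alpha| < 1 determines its coefficients. *)

From Stdlib Require Import Reals Lra Psatz.
Open Scope R_scope.

Lemma rad_eq_iff x y w : rad x y = w <-> x ^ 2 + y ^ 2 = w ^ 2 /\ 0 <= w.
Proof.
  unfold rad; split.
  - intros <-. split; [symmetry; apply pow2_sqrt; nra | apply sqrt_pos].
  - intros [E Hw]. apply sqrt_lem_1; nra.
Qed.

Lemma rad_spec x y : x ^ 2 + y ^ 2 = rad x y ^ 2 /\ 0 <= rad x y.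
Proof. apply rad_eq_iff; reflexivity. Qed.

Lemma Rabs_le_rad x y : Rabs x <= rad x y.
Proof.
  destruct (rad_spec x y) as [E Hr].
  unfold Rabs; destruct Rcase_abs; nra.
Qed.

Lemma cone_form_boost c s x y u : c ^ 2 + s ^ 2 = 1 ->
  (x + c * u) ^ 2 + (s * y) ^ 2 - (u + c * x) ^ 2 = s ^ 2 * (x ^ 2 + y ^ 2 - u ^ 2).
Proof.
  intros Hcs.
  pose proof (f_equal (fun t => t * (x ^ 2 - u ^ 2)) Hcs). simpl in *. nra.
Qed.

Lemma cone_nonneg_boost c x y u : c ^ 2 < 1 -> x ^ 2 + y ^ 2 = u ^ 2 ->
  0 <= u <-> 0 <= u + c * x.
Proof.
  intros Hc E.
  assert (Hx : x ^ 2 <= u ^ 2) by nra.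
  split; intros Hu.
  - destruct (Rle_dec 0 (u + c * x)) as [|Hneg]; [assumption | exfalso].
    assert ((c * x) ^ 2 > u ^ 2) by nra. nra.
  - destruct (Rle_dec 0 u) as [|Hneg]; [assumption | exfalso].
    assert (Hcx : (c * x) ^ 2 >= u ^ 2) by nra.
    assert ((1 - c ^ 2) * x ^ 2 <= 0) by nra.
    assert (x ^ 2 <= 0) by nra. nra.
Qed.

Lemma rad_boost c s x y u : c ^ 2 + s ^ 2 = 1 -> s <> 0 ->
  rad x y = u <-> rad (x + c * u) (s * y) = u + c * x.
Proof.
  intros Hcs Hs.
  assert (Hs2 : 0 < s ^ 2) by (destruct (Rdichotomy s 0 Hs); nra).
  pose proof (cone_form_boost c s x y u Hcs) as Hform.
  rewrite !rad_eq_iff; split; intros [E Hu].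
  - rewrite <- (cone_nonneg_boost c x y u); [split; [nra | exact Hu] | lra | exact E].
  - assert (E' : x ^ 2 + y ^ 2 = u ^ 2) by nra.
    rewrite (cone_nonneg_boost c x y u); [split; [exact E' | exact Hu] | lra | exact E'].
Qed.

Lemma vertical_image_kbranch phi M N x3 y3 : 0 < phi < PI ->
  (exists x1 y1 : R,
      vbranch M N x1 y1 /\
      x1 = x3 - M * (cos phi / sin phi) * y3 - N * cos phi /\
      y1 = / sin phi * y3)
  <-> kbranch (cos phi) (sin phi * M) (sin phi ^ 2 * N) x3 y3.
Proof.
  intros Hphi.
  assert (Hs : 0 < sin phi) by (apply sin_gt_0; lra).
  assert (Hcs : cos phi ^ 2 + sin phi ^ 2 = 1)
    by (pose proof (sin2_cos2 phi); unfold Rsqr in *; lra).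
  set (c := cos phi) in *; set (s := sin phi) in *.
  set (x1 := x3 - M * (c / s) * y3 - N * c).
  set (y1 := / s * y3).
  assert (Ex : x1 + c * (M * y1 + N) = x3) by (unfold x1, y1; field; lra).
  assert (Ey : s * y1 = y3) by (unfold y1; field; lra).
  assert (Er : M * y1 + N + c * x1 = c * x3 + s * M * y3 + s ^ 2 * N).
  { unfold x1, y1. apply Rminus_diag_uniq.
    transitivity ((M * y3 / s + N) * (1 - c ^ 2 - s ^ 2)); [field; lra |].
    rewrite <- Hcs. ring. }
  pose proof (rad_boost c s x1 y1 (M * y1 + N) Hcs ltac:(lra)) as Hboost.
  rewrite Ex, Ey, Er in Hboost.
  unfold kbranch, vbranch; split.
  - intros [? [? [H [-> ->]]]]. rewrite (proj1 Hboost H). ring.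
  - intros H. exists x1, y1; repeat split.
    apply Hboost. rewrite H. ring.
Qed.

Lemma is_image_of_vertical_iff P phi M N : 0 < phi < PI ->
  is_image_of_vertical P phi M N <->
  (forall x y, P x y <-> kbranch (cos phi) (sin phi * M) (sin phi ^ 2 * N) x y).
Proof.
  intros Hphi. unfold is_image_of_vertical.
  split; intros H x y; rewrite (H x y); [|symmetry]; apply vertical_image_kbranch, Hphi.
Qed.

Lemma kbranch_chord_eq a b g x x' y : x <> x' ->
  kbranch a b g x y -> kbranch a b g x' y -> a * (rad x y + rad x' y) = x + x'.
Proof.
  unfold kbranch; intros Hx H H'.
  destruct (rad_spec x y) as [E _].
  destruct (rad_spec x' y) as [E' _].
  apply Rmult_eq_reg_l with (x - x'); [| lra].
  transitivity ((rad x y - rad x' y) * (rad x y + rad x' y)); [rewrite H, H'; ring | nra].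
Qed.

(* For |a| = 1 the branch is a parabola whose axis is horizontal. *)
Lemma kbranch_unit_slope_horizontal a b g x x' y : 0 < g -> a ^ 2 = 1 ->
  kbranch a b g x y -> kbranch a b g x' y -> x = x'.
Proof.
  unfold kbranch; intros Hg Ha H H'.
  set (k := b * y + g).
  replace (a * x + b * y + g) with (a * x + k) in H by (unfold k; ring).
  replace (a * x' + b * y + g) with (a * x' + k) in H' by (unfold k; ring).
  destruct (proj1 (rad_eq_iff _ _ _) H) as [E _].
  destruct (proj1 (rad_eq_iff _ _ _) H') as [E' _].
  assert (Ey : y ^ 2 = 2 * a * k * x + k ^ 2).
  { transitivity ((a * x + k) ^ 2 - a ^ 2 * x ^ 2); [| rewrite Ha]; nra. }
  assert (Ey' : y ^ 2 = 2 * a * k * x' + k ^ 2).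
  { transitivity ((a * x' + k) ^ 2 - a ^ 2 * x' ^ 2); [| rewrite Ha]; nra. }
  destruct (Req_dec x x') as [|Hx]; [assumption | exfalso].
  assert (Hk : k = 0).
  { assert (Hak : (a * k) * (x - x') = 0) by lra.
    destruct (Rmult_integral _ _ Hak) as [Hak0|]; [|lra].
    destruct (Rmult_integral _ _ Hak0); [nra | assumption]. }
  assert (y = 0) by nra.
  unfold k in Hk. subst y. lra.
Qed.

Lemma horizontal_chord_slope a b g : 0 < g ->
  has_horizontal_chord (kbranch a b g) -> -1 < a < 1.
Proof.
  intros Hg [x [x' [y [Hx [H H']]]]].
  pose proof (kbranch_chord_eq a b g x x' y Hx H H') as Hslope.
  pose proof (Rabs_le_rad x y). pose proof (Rabs_le_rad x' y).
  pose proof (Rabs_triang x x').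
  assert (Hpos : 0 < rad x y + rad x' y).
  { destruct (Req_dec x 0) as [->|Hx0]; rewrite ?Rabs_R0 in *.
    - pose proof (Rabs_pos_lt x' ltac:(lra)). lra.
    - pose proof (Rabs_pos_lt x Hx0). pose proof (Rabs_pos x'). lra. }
  assert (Hle : Rabs a <= 1).
  { apply Rmult_le_reg_r with (rad x y + rad x' y); [exact Hpos |].
    rewrite <- (Rabs_pos_eq (rad x y + rad x' y)) at 1 by lra.
    rewrite <- Rabs_mult, Hslope. lra. }
  assert (Hne : a ^ 2 <> 1)
    by (intros Ha; exact (Hx (kbranch_unit_slope_horizontal a b g x x' y Hg Ha H H'))).
  revert Hle Hne. unfold Rabs; destruct Rcase_abs; intros; split; nra.
Qed.

Lemma kbranch_ray a b g p q : 0 < g -> p ^ 2 + q ^ 2 = 1 -> a * p + b * q < 1 ->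
  exists rho, 0 < rho /\ kbranch a b g (rho * p) (rho * q).
Proof.
  intros Hg Hpq Hdir.
  set (rho := g / (1 - a * p - b * q)).
  assert (Hrho : 0 < rho) by (apply Rdiv_lt_0_compat; lra).
  exists rho; split; [exact Hrho |].
  unfold kbranch.
  replace (a * (rho * p) + b * (rho * q) + g) with rho by (unfold rho; field; lra).
  apply rad_eq_iff; split; [| lra].
  transitivity (rho ^ 2 * (p ^ 2 + q ^ 2)); [ring | rewrite Hpq; ring].
Qed.

Lemma kbranch_coeffs_unique a b g a' b' g' : 0 < g -> -1 < a < 1 ->
  (forall x y, kbranch a b g x y <-> kbranch a' b' g' x y) ->
  a' = a /\ b' = b /\ g' = g.
Proof.
  intros Hg Ha Heq.
  assert (Hvanish : forall x y, kbranch a b g x y ->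
            (a - a') * x + (b - b') * y + (g - g') = 0).
  { intros x y H. pose proof (proj1 (Heq x y) H). unfold kbranch in *. lra. }
  assert (Hq : exists q, q ^ 2 = 1 /\ b * q < 1).
  { destruct (Rlt_or_le b 1); [exists 1 | exists (-1)]; split; lra. }
  destruct Hq as [q [Hq2 Hbq]].
  destruct (kbranch_ray a b g 1 0 Hg ltac:(lra) ltac:(lra)) as [rho1 [Hrho1 P1]].
  destruct (kbranch_ray a b g (-1) 0 Hg ltac:(lra) ltac:(lra)) as [rho2 [Hrho2 P2]].
  destruct (kbranch_ray a b g 0 q Hg ltac:(lra) ltac:(lra)) as [rho3 [Hrho3 P3]].
  apply Hvanish in P1, P2, P3.
  assert (Ea : a' = a).
  { assert (Hprod : (a - a') * (rho1 + rho2) = 0) by lra.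
    destruct (Rmult_integral _ _ Hprod); lra. }
  subst a'.
  assert (Eg : g' = g) by lra.
  subst g'.
  assert (Hprod : (b - b') * (rho3 * q) = 0) by lra.
  destruct (Rmult_integral _ _ Hprod) as [| Hzero]; [repeat split; lra | exfalso].
  destruct (Rmult_integral _ _ Hzero); nra.
Qed.

Theorem lemma7 (alpha beta gamma : R) :
  0 < gamma ->
  has_horizontal_chord (kbranch alpha beta gamma) ->
  exists phi M N : R,
    (0 < phi < PI /\ 0 < N /\
     is_image_of_vertical (kbranch alpha beta gamma) phi M N) /\
    (forall phi' M' N' : R,
       0 < phi' < PI -> 0 < N' ->
       is_image_of_vertical (kbranch alpha beta gamma) phi' M' N' ->
       phi' = phi /\ M' = M /\ N' = N).
Proof.
  intros Hg Hchord.
  pose proof (horizontal_chord_slope _ _ _ Hg Hchord) as Ha.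
  set (phi := acos alpha).
  assert (Hphi : 0 < phi < PI) by (apply acos_bound_lt; exact Ha).
  assert (Hc : cos phi = alpha) by (apply cos_acos; lra).
  assert (Hs : 0 < sin phi) by (apply sin_gt_0; lra).
  exists phi, (beta / sin phi), (gamma / sin phi ^ 2).
  split; [split; [exact Hphi | split] |].
  - apply Rdiv_lt_0_compat; [exact Hg | apply pow_lt, Hs].
  - apply is_image_of_vertical_iff; [exact Hphi |].
    replace (sin phi * (beta / sin phi)) with beta by (field; lra).
    replace (sin phi ^ 2 * (gamma / sin phi ^ 2)) with gamma by (field; lra).
    rewrite Hc. tauto.
  - intros phi' M' N' Hphi' _ Himg.
    rewrite (is_image_of_vertical_iff _ _ _ _ Hphi') in Himg.
    destruct (kbranch_coeffs_unique _ _ _ _ _ _ Hg Ha Himg) as [Ec [EM EN]].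
    assert (Ephi : phi' = phi) by (apply cos_inj; lra).
    subst phi'.
    assert (Hs2 : sin phi ^ 2 <> 0) by (apply pow_nonzero; lra).
    repeat split; [rewrite <- EM | rewrite <- EN]; field; lra.
Qed.
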